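(* Let $\mathbf{A}\in\{0,1\}^{N\times N}$ be the adjacency matrix of a connected simple undirected graph on $N$ nodes whose real sign rank is $3$. For real numbers $k_1,k_1',\dots,k_N,k_N'$ and $x$, let $\mathbf{Z}\in\mathbb{R}^{N\times 3}$ have $i$-th row $(\cos(k_ix)\sin(k_i'x),\ \cos(k_ix)\cos(k_i'x),\ \sin(k_ix))$ and let $\tilde{\mathbf{A}}=\mathbf{Z}\mathbf{Z}^\top$. Then there exist $k_i,k_i'\in\mathbb{R}$ ($i=1,\dots,N$) such that $\operatorname{sign}(A_{ij})=\operatorname{sign}(\tilde A_{ij})$ for all $i\neq j$ (for any fixed nonzero $x$).
   Context: $\operatorname{sign}:\mathbb{R}\to\{+,-\}$ takes the value $-$ on $(-\infty,0]$ and $+$ on $(0,\infty)$, applied entrywise. Graphs have no self-loops and diagonal entries of adjacency matrices are ignored throughout. The real sign rank of a graph with adjacency $\mathbf{A}$ is the minimal $f$ such that there exists $\mathbf{Z}\in\mathbb{R}^{N\times f}$ with $\operatorname{sign}(A_{ij})=\operatorname{sign}((\mathbf{Z}\mathbf{Z}^\top)_{ij})$ for all $i\neq j$. *)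

From HB Require Import structures.
From mathcomp Require Import all_boot all_order all_algebra.
From mathcomp Require Import all_classical all_reals.
From mathcomp Require Import trigo.
Set Implicit Arguments. Unset Strict Implicit. Unset Printing Implicit Defensive.
Import Order.TTheory GRing.Theory Num.Theory.
Local Open Scope ring_scope.

(* sign : R -> {+,-}; encoded as a bool, true = '+', false = '-'.
   sign x = '+' iff 0 < x, i.e. '-' on (-oo,0] and '+' on (0,oo). *)
Definition sign (R : realType) (x : R) : bool := 0 < x.

Definition adjmx (R : realType) (N : nat) (e : rel 'I_N) : 'M[R]_N :=
  \matrix_(i, j) (e i j)%:R.

Definition sign_realizable (R : realType) (N : nat) (A : 'M[R]_N) (f : nat) :=
  exists Z : 'M[R]_(N, f),
    forall i j : 'I_N, i != j -> sign (A i j) = sign ((Z *m Z^T) i j).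

Definition sign_rank_is (R : realType) (N : nat) (A : 'M[R]_N) (f : nat) :=
  sign_realizable A f /\ (forall g, sign_realizable A g -> (f <= g)%N).

Definition Zmat (R : realType) (N : nat) (k k' : 'I_N -> R) (x : R)
  : 'M[R]_(N, 3) :=
  \matrix_(i, c)
    (if nat_of_ord c == 0%N then cos (k i * x) * sin (k' i * x)
     else if nat_of_ord c == 1%N then cos (k i * x) * cos (k' i * x)
     else sin (k i * x)).

From HB Require Import structures.
From mathcomp Require Import all_boot all_order all_algebra.
From mathcomp Require Import all_classical all_reals.
From mathcomp Require Import trigo.
From mathcomp Require Import lra.
Import Order.TTheory GRing.Theory Num.Theory.
Local Open Scope ring_scope.

(* Take any sign representation Z of A in dimension 3.  Since the graph is
   connected, every node has a neighbour (if N >= 2), so every row of Z has a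
   positive inner product with another row and is therefore nonzero.  Dividing each
   row by its norm multiplies each entry of Z Z^T by a positive number, so the
   normalised rows still represent the signs of A.  Finally every unit vector
   of R^3 is (cos a sin b, cos a cos b, sin a) in spherical coordinates, and
   k_i = a_i / x, k'_i = b_i / x recover the rows. *)

Section SphericalCoordinates.
Variable R : realType.

Lemma unit_circle_angle (p q : R) : p ^+ 2 + q ^+ 2 = 1 ->
  exists b : R, sin b = p /\ cos b = q.
Proof.
move=> pq1.
have q_itv : q \in `[-1, 1] by rewrite in_itv /=; apply/andP; split; nra.
have sin_acosq : sin (acos q) = `|p|.
  by rewrite sin_acos -?in_itv // -pq1 addrK sqrtr_sqr.
have [p_ge0|p_lt0] := leP 0 p.
  by exists (acos q); rewrite sin_acosq ger0_norm // acosK.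
by exists (- acos q); rewrite sinN cosN sin_acosq ltr0_norm ?opprK // acosK.
Qed.

Lemma polar_coordinates (c p q : R) : 0 <= c -> p ^+ 2 + q ^+ 2 = c ^+ 2 ->
  exists b : R, c * sin b = p /\ c * cos b = q.
Proof.
move=> c_ge0 pqc; have [c0|c_neq0] := eqVneq c 0.
  move: pqc; rewrite c0 expr0n /= => /eqP.
  rewrite paddr_eq0 ?sqr_ge0 // !sqrf_eq0 => /andP[/eqP-> /eqP->].
  by exists 0; rewrite !mul0r.
have [b [sb cb]] : exists b : R, sin b = p / c /\ cos b = q / c.
  by apply: unit_circle_angle; rewrite !expr_div_n -mulrDl pqc divff ?expf_neq0.
by exists b; rewrite sb cb; split; rewrite mulrC divfK.
Qed.

Lemma spherical_coordinates (p q r : R) : p ^+ 2 + q ^+ 2 + r ^+ 2 = 1 ->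
  exists a b : R, [/\ cos a * sin b = p, cos a * cos b = q & sin a = r].
Proof.
move=> pqr1.
have r_itv : r \in `[-1, 1] by rewrite in_itv /=; apply/andP; split; nra.
have cos_asinr : cos (asin r) = Num.sqrt (p ^+ 2 + q ^+ 2).
  by rewrite cos_asin -?in_itv // -pqr1 addrK.
have [b [sb cb]] : exists b : R, cos (asin r) * sin b = p /\ cos (asin r) * cos b = q.
  apply: polar_coordinates; rewrite cos_asinr ?sqrtr_ge0 // sqr_sqrtr //.
  by apply: addr_ge0; exact: sqr_ge0.
by exists (asin r), b; rewrite asinK.
Qed.

End SphericalCoordinates.

Section RowNormalization.
Context {R : realType} {N f : nat}.
Implicit Types Z W : 'M[R]_(N, f).

Lemma mulmx_trE Z W i j : (Z *m W^T) i j = \sum_c Z i c * W j c.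
Proof. by rewrite mxE; apply: eq_bigr => c _; rewrite mxE. Qed.

Definition rownorm Z i := Num.sqrt (\sum_c Z i c ^+ 2).

Definition normalize_rows Z := \matrix_(i, c) (Z i c / rownorm Z i).

Lemma rownorm_sqr Z i : rownorm Z i ^+ 2 = \sum_c Z i c ^+ 2.
Proof. by rewrite sqr_sqrtr // sumr_ge0 // => c _; exact: sqr_ge0. Qed.

Lemma rownorm_gt0 Z i j : 0 < (Z *m Z^T) i j -> 0 < rownorm Z i.
Proof.
move=> Zij_gt0; rewrite lt0r sqrtr_ge0 andbT; apply: contraTneq Zij_gt0 => Zi0.
have /psumr_eq0P Zi_eq0 : \sum_c Z i c ^+ 2 = 0 by rewrite -rownorm_sqr Zi0 expr0n.
rewrite mulmx_trE big1 ?ltxx // => c _.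
have /eqP := Zi_eq0 (fun c _ => sqr_ge0 (Z i c)) c isT.
by rewrite sqrf_eq0 => /eqP->; rewrite mul0r.
Qed.

Lemma normalize_rows_sqr_sum Z i : 0 < rownorm Z i ->
  \sum_c normalize_rows Z i c ^+ 2 = 1.
Proof.
move=> Zi_gt0; under eq_bigr do rewrite mxE expr_div_n.
by rewrite -mulr_suml -rownorm_sqr divff // expf_neq0 // gt_eqF.
Qed.

Lemma sign_normalize_rows Z i j : 0 < rownorm Z i -> 0 < rownorm Z j ->
  sign ((normalize_rows Z *m (normalize_rows Z)^T) i j) = sign ((Z *m Z^T) i j).
Proof.
move=> Zi_gt0 Zj_gt0; rewrite !mulmx_trE.
under eq_bigr do rewrite !mxE mulrACA.
by rewrite -mulr_suml /sign pmulr_lgt0 // mulr_gt0 // invr_gt0.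
Qed.

End RowNormalization.

Lemma Zmat_unit_rows {R : realType} {N : nat} (W : 'M[R]_(N, 3)) (x : R) :
  x != 0 -> exists k k' : 'I_N -> R, forall i,
    \sum_c W i c ^+ 2 = 1 -> forall c, Zmat k k' x i c = W i c.
Proof.
move=> x_neq0.
have angles i : exists ab : R * R, \sum_c W i c ^+ 2 = 1 ->
    [/\ cos ab.1 * sin ab.2 = W i 0, cos ab.1 * cos ab.2 = W i 1 & sin ab.1 = W i 2].
  have [Wi1|/eqP Wi_neq1] := eqVneq (\sum_c W i c ^+ 2) 1; last by exists (0, 0).
  have [|a [b Wi]] := @spherical_coordinates R (W i 0) (W i 1) (W i 2).
    rewrite -Wi1 !big_ord_recl big_ord0 addr0 addrA.
    by congr (W i _ ^+ 2 + W i _ ^+ 2 + W i _ ^+ 2); apply: val_inj.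
  by exists (a, b).
have [ab ab_spec] := choice angles.
exists (fun i => (ab i).1 / x), (fun i => (ab i).2 / x) => i /ab_spec[W0 W1 W2] c.
rewrite mxE !divfK //.
case: c => -[|[|[|//]]] c_lt /=; [rewrite W0|rewrite W1|rewrite W2];
  by congr (W i _); apply: val_inj.
Qed.

Lemma connect_neighbour {T : finType} {e : rel T} {i j : T} :
  connect e i j -> i != j -> exists y, e i y.
Proof.
move=> /connectP[[|y p] /= e_path ->]; first by rewrite eqxx.
by case/andP: e_path => e_iy _ _; exists y.
Qed.

Theorem proposition2 (R : realType) (N : nat) (e : rel 'I_N)
  (e_sym : symmetric e) (e_irr : irreflexive e)
  (e_conn : forall i j : 'I_N, connect e i j)
  (h_rank : sign_rank_is (adjmx R e) 3)
  (x : R) (hx : x != 0) :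
  exists k k' : 'I_N -> R,
    forall i j : 'I_N, i != j ->
      sign (adjmx R e i j) = sign ((Zmat k k' x *m (Zmat k k' x)^T) i j).
Proof.
have [[Z Z_sign] _] := h_rank.
have edge_gram_gt0 i y : e i y -> 0 < (Z *m Z^T) i y.
  move=> e_iy; have iy : i != y by apply: contraTneq e_iy => ->; rewrite e_irr.
  by rewrite -[_ < _]/(sign _) -Z_sign // /sign /adjmx mxE e_iy ltr01.
have rownorm_Z_gt0 i j : i != j -> 0 < rownorm Z i.
  move=> ij; have [y /edge_gram_gt0] := connect_neighbour (e_conn i j) ij.
  exact: rownorm_gt0.
have [k [k' Zmat_eq]] := Zmat_unit_rows (normalize_rows Z) x hx.
exists k, k' => i j ij.
have Zi_gt0 := rownorm_Z_gt0 i j ij.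
have Zj_gt0 : 0 < rownorm Z j by apply: (rownorm_Z_gt0 j i); rewrite eq_sym.
rewrite Z_sign // -sign_normalize_rows // !mulmx_trE.
by congr sign; apply: eq_bigr => c _; rewrite !Zmat_eq ?normalize_rows_sqr_sum.
Qed.
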